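(* Let $b$ be a prime, $s\in\mathbb{N}$, $\boldsymbol{k}=(k_1,\dots,k_s)\in\mathbb{N}_0^s$, and write $c_j:=\mu_1(k_j)$ and $u:=\{j\mid k_j\neq0\}$. Then for every $j$ and every $L_j\in\mathcal{L}_{\infty,\infty}$, the integer $\ell_j$ with $\vec\ell_j=L_j^\top\vec k_j$ satisfies $\mu_1(\ell_j)=c_j$. Moreover, for every $\boldsymbol{k}'=(k_1',\dots,k_s')\in\mathbb{N}_0^s$ with $\mu_1(k'_j)=c_j$ for all $j$, and every integer $n\ge\max_jc_j$, \[\Pr\left[L_j^\top\vec{k}_j=\vec{k}'_j\text{ for all }j\;\middle|\;L_j\in\mathcal{L}_{\infty,n}\right]=\left(\frac{b}{b-1}\right)^{|u|}b^{-(c_1+\cdots+c_s)},\] where $L_1,\dots,L_s$ are drawn independently at random from $\mathcal{L}_{\infty,n}$.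
   Context: $\mathbb{F}_b=\{0,\dots,b-1\}$ is the field with $b$ elements. For $k\in\mathbb{N}_0$ with $b$-adic expansion $k=\kappa_0+\kappa_1b+\cdots$, write $\vec{k}=(\kappa_0,\kappa_1,\ldots)^\top\in\mathbb{F}_b^{\mathbb{N}}$. NRT weight: for $k\in\mathbb{N}$ written as $k=\kappa_1b^{c_1-1}+\cdots+\kappa_vb^{c_v-1}$ with $\kappa_i\in\{1,\dots,b-1\}$ and $c_1>\cdots>c_v>0$, $\mu_1(k)=c_1$; $\mu_1(0)=0$. For $w,n\in\mathbb{N}\cup\{\infty\}$, $\mathcal{L}_{w,n}$ is the set of matrices $L=(\ell_{i,j})\in\mathbb{F}_b^{w\times n}$ with $\ell_{i,j}=0$ if $i<j$ and $\ell_{i,j}\neq0$ if $i=j$. A random element of $\mathcal{L}_{w,n}$ is obtained by choosing each entry independently: diagonal entries uniformly from $\mathbb{F}_b\setminus\{0\}$, entries with $i>j$ uniformly from $\mathbb{F}_b$, entries with $i<j$ equal to $0$. For $L\in\mathcal{L}_{\infty,n}$, $L^\top\vec k\in\mathbb{F}_b^n$ is the matrix-vector product over $\mathbb{F}_b$, compared with the first $n$ digits of $\vec k'_j$. *)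

From mathcomp Require Import all_boot all_order all_algebra.
Unset Printing Implicit Defensive.
Import GRing.Theory Num.Theory.
Local Open Scope ring_scope.

(* F_b is 'F_b (b prime).  Indices of digits / matrix rows and columns are
   0-based: digit i of k is kappa_i (coefficient of b^i), matrix entry
   L i j corresponds to l_{i+1,j+1} of the paper. *)

Definition digit (b k i : nat) : 'F_b := ((k %/ b ^ i) %% b)%N%:R.

(* NRT weight mu_1: 1 + position of the highest nonzero digit, mu_1(0)=0.
   (Digits at positions >= k are zero, so the range i < k.+1 is exhaustive.) *)
Definition mu1 (b k : nat) : nat :=
  \max_(i < k.+1 | digit b k i != 0%R) i.+1.

Definition inLinf (b : nat) (L : nat -> nat -> 'F_b) : Prop :=
  (forall i j, (i < j)%N -> L i j = 0) /\ (forall i, L i i != 0).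

(* (L^T k)_j = sum_i L i j * kappa_i ; the sum is over all i, terms with
   i >= k.+1 vanish since the digits of k vanish there. *)
Definition LTvec (b : nat) (L : nat -> nat -> 'F_b) (k : nat) (j : nat) : 'F_b :=
  \sum_(i < k.+1) L i j * digit b k i.

(* Probability weight of entry (i,j) taking value x, for a random element of
   L_{w,n}: uniform on F_b\{0} on the diagonal, uniform on F_b below it,
   and 0 above it.  Entries are independent. *)
Definition entry_prob (b i j : nat) (x : 'F_b) : rat :=
  if (i < j)%N then (x == 0)%:R
  else if i == j then (x != 0)%:R / (b.-1)%:R
  else 1 / b%:R.

Definition mat_prob (b N n : nat) (M : {ffun 'I_N * 'I_n -> 'F_b}) : rat :=
  \prod_(e : 'I_N * 'I_n) entry_prob b e.1 e.2 (M e).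

(* Pr[ L_j^T k_j = first n digits of k'_j for all j ], L_1..L_s independent
   random elements of L_{N,n}, where the rows are truncated at N (the event
   only depends on rows i < N when all k_j < b^N). *)
Definition prob_event (b s N n : nat) (k k' : 'I_s -> nat) : rat :=
  \sum_(Ls : {ffun 'I_s -> {ffun 'I_N * 'I_n -> 'F_b}})
     (\prod_(j < s) mat_prob b N n (Ls j)) *
     ([forall j : 'I_s, forall c : 'I_n,
        (\sum_(i < N) Ls j (i, c) * digit b (k j) i) == digit b (k' j) c])%:R.

From mathcomp Require Import all_boot all_order all_algebra.
From mathcomp Require Import ring.
Import GRing.Theory Num.Theory.
Local Open Scope ring_scope.

(* Write c = mu1 k.  As L is lower triangular with nonzero diagonal, digit c - 1
   of L^T k is L (c - 1) (c - 1) * kappa_(c - 1) != 0, while all digits from c on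
   vanish; hence mu1 (L^T k) = c.
   The entries of L_1, ..., L_s are independent, so the event splits into one
   event per j and per column c of L_j: digit c of L_j^T k_j equals digit c of
   k'_j.  If c >= mu1 k_j both digits are 0.  If c = mu1 k_j - 1, the digit is
   L_j c c * kappa_c, uniform on F_b \ {0}: probability 1/(b-1).  If
   c < mu1 k_j - 1, adding t to the entry of row mu1 k_j - 1, which is uniform on
   F_b, shifts the digit by t times a nonzero digit of k_j, so the digit is
   uniform on F_b: probability 1/b. *)

Section FibreWeight.

Context {R : numFieldType} {T U : finType} (w : T -> R) (S : T -> U).

Definition fibre_weight (a : U) : R := \sum_x w x * (S x == a)%:R.

Lemma sum_fibre_weight : \sum_a fibre_weight a = \sum_x w x.
Proof.
rewrite exchange_big /=; apply: eq_bigr => x _.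
rewrite -mulr_sumr (bigD1 (S x)) //= eqxx big1 ?addr0 ?mulr1 // => a.
by rewrite eq_sym => /negbTE ->.
Qed.

Lemma eq_fibre_weight (h : T -> T) (a1 a2 : U) : injective h ->
  (forall x, w (h x) = w x) ->
  (forall x, w x != 0 -> (S (h x) == a1) = (S x == a2)) ->
  fibre_weight a1 = fibre_weight a2.
Proof.
move=> h_inj w_h S_h; rewrite /fibre_weight (reindex_inj h_inj).
apply: eq_bigr => x _; rewrite w_h.
by have [-> | wx_neq0] := eqVneq (w x) 0; rewrite ?mul0r ?S_h.
Qed.

Lemma fibre_weight_uniform (A : {set U}) (a : U) : \sum_x w x = 1 ->
  {in A &, forall a1 a2, fibre_weight a1 = fibre_weight a2} ->
  (forall a', a' \notin A -> fibre_weight a' = 0) ->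
  a \in A -> fibre_weight a = #|A|%:R^-1.
Proof.
move=> sum_w1 const_A zero_off_A aA.
have cardA_neq0 : #|A|%:R != 0 :> R by rewrite pnatr_eq0 -lt0n; apply/card_gt0P; exists a.
have : \sum_(a' in A) fibre_weight a' = 1.
  rewrite -sum_w1 -sum_fibre_weight [RHS](bigID (mem A)) /= [X in _ = _ + X]big1 ?addr0 //.
rewrite (eq_bigr (fun _ => fibre_weight a)) => [|a' a'A]; last exact: const_A.
rewrite sumr_const -[fibre_weight a *+ _]mulr_natr => fibre_a_card.
by apply: (mulIf cardA_neq0); rewrite fibre_a_card mulVf.
Qed.

End FibreWeight.

Lemma natr_forall (R : comPzRingType) (I : finType) (Q : pred I) :
  [forall i, Q i]%:R = \prod_i (Q i)%:R :> R.
Proof.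
have [/forallP allQ | /forallPn [i notQi]] := boolP [forall i, Q i].
  by rewrite big1 // => i _; rewrite allQ.
by rewrite (bigD1 i) //= (negbTE notQi) mul0r.
Qed.

Lemma sum_ffun_prod_forall (R : comPzRingType) (I T : finType)
    (F : I -> T -> R) (Q : I -> T -> bool) :
  \sum_(f : {ffun I -> T}) (\prod_i F i (f i)) * [forall i, Q i (f i)]%:R =
  \prod_i \sum_t F i t * (Q i t)%:R.
Proof.
rewrite bigA_distr_bigA /=; apply: eq_bigr => f _.
by rewrite (natr_forall _ _ (fun i => Q i (f i))) -big_split.
Qed.

Lemma prime_natr_neq0 (R : numDomainType) (p : nat) : prime p -> p%:R != 0 :> R.
Proof. by move=> p_prime; rewrite pnatr_eq0 -lt0n prime_gt0. Qed.

Lemma prime_pred_natr_neq0 (R : numDomainType) (p : nat) : prime p -> p.-1%:R != 0 :> R.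
Proof. by move=> p_prime; rewrite pnatr_eq0 -lt0n -ltnS prednK ?prime_gt1 ?prime_gt0. Qed.

Section Radix.

Variable b : nat.
Hypothesis b_prime : prime b.

Let b_gt1 : (1 < b)%N := prime_gt1 b_prime.

Lemma digit_neq0_small {k i : nat} : digit b k i != 0 -> (i < k.+1)%N.
Proof.
apply: contraR; rewrite -leqNgt => lt_ki.
have lt_k_bi : (k < b ^ i)%N by apply: ltn_trans lt_ki (ltn_expl _ b_gt1).
by rewrite /digit divn_small // mod0n.
Qed.

Lemma digit_neq0_lt_mu1 {k i : nat} : digit b k i != 0 -> (i < mu1 b k)%N.
Proof.
move=> dki; rewrite /mu1.
exact: (@leq_bigmax_cond _ (fun j : 'I_k.+1 => digit b k j != 0) (fun j => j.+1)
  (Ordinal (digit_neq0_small dki)) dki).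
Qed.

Lemma digit_ge_mu1 (k i : nat) : (mu1 b k <= i)%N -> digit b k i = 0.
Proof.
by move=> le_mi; apply/eqP; apply: contraTT le_mi => /digit_neq0_lt_mu1; rewrite -ltnNge.
Qed.

Lemma digit_mu1_neq0 {k : nat} : (0 < mu1 b k)%N -> digit b k (mu1 b k).-1 != 0.
Proof.
rewrite /mu1; have [|] := posnP #|(fun i : 'I_k.+1 => digit b k i != 0)|.
  by move/card0_eq => no_digit; rewrite big_pred0.
by case/(eq_bigmax_cond (fun i : 'I_k.+1 => i.+1)) => i dki ->.
Qed.

Lemma mu1_eq (k m : nat) :
  (forall i, digit b k i != 0 -> (i < m)%N) ->
  ((0 < m)%N -> digit b k m.-1 != 0) -> mu1 b k = m.
Proof.
move=> lt_m top_m; apply/eqP; rewrite eqn_leq; apply/andP; split.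
  have [-> //|mu1_gt0] := posnP (mu1 b k).
  by have := lt_m _ (digit_mu1_neq0 mu1_gt0); rewrite prednK.
have [-> //|m_gt0] := posnP m.
by have := digit_neq0_lt_mu1 (top_m m_gt0); rewrite prednK.
Qed.

Lemma digit_trunc_log_neq0 {k : nat} : (0 < k)%N -> digit b k (trunc_log b k) != 0.
Proof.
move=> k_gt0; set i := trunc_log b k.
have bi_gt0 : (0 < b ^ i)%N by rewrite expn_gt0 ltnW.
have q_gt0 : (0 < k %/ b ^ i)%N by rewrite divn_gt0 // trunc_logP.
have q_lt_b : (k %/ b ^ i < b)%N by rewrite ltn_divLR // -expnS trunc_log_ltn.
apply/eqP => /(congr1 val); rewrite /digit /= val_Fp_nat // !modn_small // => q_eq0.
by rewrite q_eq0 in q_gt0.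
Qed.

Lemma mu1_eq0 (k : nat) : (mu1 b k == 0%N) = (k == 0%N).
Proof.
have [-> | k_gt0] := posnP k.
  by rewrite (@mu1_eq 0 0) // => i; rewrite /digit div0n mod0n eqxx.
have := digit_neq0_lt_mu1 (digit_trunc_log_neq0 k_gt0).
by rewrite eqn0Ngt => /(leq_ltn_trans (leq0n _)) ->.
Qed.

Lemma Fp_val_lt (x : 'F_b) : (x < b)%N.
Proof. by have := ltn_ord x; rewrite [X in (_ < X)%N -> _]Fp_cast. Qed.

Lemma digit0_add_mul (x : 'F_b) (y : nat) : digit b (x + b * y) 0 = x.
Proof. by rewrite /digit expn0 divn1 addnC mulnC modnMDl Fp_nat_mod // natr_Zp. Qed.

Lemma digitS_add_mul (x : 'F_b) (y i : nat) : digit b (x + b * y) i.+1 = digit b y i.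
Proof.
rewrite /digit expnS divnMA addnC mulnC divnMDl ?prime_gt0 //.
by rewrite (divn_small (Fp_val_lt x)) addn0.
Qed.

Fixpoint undigits (d : nat -> 'F_b) (m : nat) : nat :=
  if m is m'.+1 then (d 0%N + b * undigits (fun i => d i.+1) m')%N else 0%N.

Lemma digit_undigits (d : nat -> 'F_b) (m i : nat) :
  digit b (undigits d m) i = if (i < m)%N then d i else 0.
Proof.
elim: m d i => [|m IHm] d [|i] /=.
- by rewrite /digit div0n mod0n.
- by rewrite /digit div0n mod0n.
- exact: digit0_add_mul.
- by rewrite digitS_add_mul IHm.
Qed.

Section LowerTriangular.

Variable L : nat -> nat -> 'F_b.
Hypothesis L_lower : inLinf b L.

Lemma LTvec_ge_mu1 (k i : nat) : (mu1 b k <= i)%N -> LTvec b L k i = 0.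
Proof.
move=> le_mi; rewrite /LTvec big1 // => j _.
have [lt_ji | le_ij] := ltnP j i; first by rewrite L_lower.1 // mul0r.
by rewrite digit_ge_mu1 ?mulr0 // (leq_trans le_mi le_ij).
Qed.

Lemma LTvec_mu1_neq0 (k : nat) : (0 < mu1 b k)%N -> LTvec b L k (mu1 b k).-1 != 0.
Proof.
move=> mu1_gt0; have dkc := digit_mu1_neq0 mu1_gt0.
rewrite /LTvec (bigD1 (Ordinal (digit_neq0_small dkc))) //= big1 ?addr0.
  by rewrite mulf_neq0 // L_lower.2.
move=> j; rewrite -val_eqE /= => ne_jc.
have [lt_jc | lt_cj | eq_jc] := ltngtP j (mu1 b k).-1.
- by rewrite L_lower.1 // mul0r.
- by rewrite digit_ge_mu1 ?mulr0 // -(prednK mu1_gt0).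
- by rewrite eq_jc eqxx in ne_jc.
Qed.

Lemma LTvec_digits (k : nat) :
  exists l : nat, (forall i, digit b l i = LTvec b L k i) /\ mu1 b l = mu1 b k.
Proof.
pose l := undigits (LTvec b L k) (mu1 b k).
have digit_l i : digit b l i = LTvec b L k i.
  by rewrite digit_undigits //; case: ltnP => // /LTvec_ge_mu1 ->.
exists l; split => //; apply: mu1_eq => // [i|]; rewrite digit_l.
  by apply: contra_neqT; rewrite -leqNgt; exact: LTvec_ge_mu1.
exact: LTvec_mu1_neq0.
Qed.

End LowerTriangular.

Section Columns.

Variable N : nat.
Implicit Types (c k : nat) (v : {ffun 'I_N -> 'F_b}).

Definition col_weight c v : rat := \prod_(i < N) entry_prob b i c (v i).

Definition col_dot k v : 'F_b := \sum_(i < N) v i * digit b k i.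

Definition col_law c k : 'F_b -> rat := fibre_weight (col_weight c) (col_dot k).

Definition col_update (i0 : 'I_N) (f : 'F_b -> 'F_b) v : {ffun 'I_N -> 'F_b} :=
  [ffun i => if i == i0 then f (v i) else v i].

Lemma sum_entry_prob (i c : nat) : \sum_(x : 'F_b) entry_prob b i c x = 1.
Proof.
rewrite /entry_prob; case: ltnP => [_ | _].
  by rewrite (bigD1 0) //= big1 ?addr0 // => x /negbTE ->.
case: eqP => _; last first.
  by rewrite sumr_const card_Fp // mul1r -[b%:R^-1 *+ b]mulr_natl mulfV ?prime_natr_neq0.
rewrite -big_distrl /= (eq_bigr (fun x : 'F_b => if x != 0 then 1 else 0)) => [|x _].
  by rewrite -big_mkcond /= sumr_const cardC1 card_Fp // mulfV ?prime_pred_natr_neq0.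
by case: (x != 0).
Qed.

Lemma sum_col_weight c : \sum_v col_weight c v = 1.
Proof.
rewrite /col_weight -(bigA_distr_bigA (fun (i : 'I_N) x => entry_prob b i c x)) /=.
by rewrite big1 // => i _; rewrite sum_entry_prob.
Qed.

Lemma col_weight_above {c v} (i : 'I_N) : col_weight c v != 0 -> (i < c)%N -> v i = 0.
Proof.
move=> wv_neq0 lt_ic; apply/eqP; apply: contraNT wv_neq0 => vi_neq0.
by rewrite /col_weight (bigD1 i) //= /entry_prob lt_ic (negbTE vi_neq0) mul0r.
Qed.

Lemma col_weight_diag {c v} (i : 'I_N) : col_weight c v != 0 -> i = c :> nat -> v i != 0.
Proof.
move=> wv_neq0 eq_ic; apply: contra_neq wv_neq0 => vi_eq0.
by rewrite /col_weight (bigD1 i) //= /entry_prob eq_ic ltnn eqxx vi_eq0 eqxx /= !mul0r.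
Qed.

Lemma col_update_inj (i0 : 'I_N) f : injective f -> injective (col_update i0 f).
Proof.
move=> f_inj v v' /ffunP eq_upd; apply/ffunP => i; have := eq_upd i; rewrite !ffunE.
by case: (i == i0) => // /f_inj.
Qed.

Lemma col_weight_update c (i0 : 'I_N) f v :
  (forall x, entry_prob b i0 c (f x) = entry_prob b i0 c x) ->
  col_weight c (col_update i0 f v) = col_weight c v.
Proof. by move=> f_prob; apply: eq_bigr => i _; rewrite ffunE; case: eqP => [-> |]. Qed.

Lemma col_dot_update k (i0 : 'I_N) f v :
  col_dot k (col_update i0 f v) = col_dot k v + (f (v i0) - v i0) * digit b k i0.
Proof.
rewrite /col_dot (bigD1 i0) // [in RHS](bigD1 i0) //= ffunE eqxx.
rewrite (eq_bigr (fun i => v i * digit b k i)) => [|i /negbTE ne_i]; last first.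
  by rewrite ffunE ne_i.
by ring.
Qed.

Lemma col_law_ge c k : (mu1 b k <= c)%N -> col_law c k 0 = 1.
Proof.
move=> le_mc; rewrite /col_law /fibre_weight -[RHS](sum_col_weight c).
apply: eq_bigr => v _.
have [-> | wv_neq0] := eqVneq (col_weight c v) 0; first by rewrite mul0r.
suff -> : col_dot k v = 0 by rewrite eqxx mulr1.
rewrite /col_dot big1 // => i _; have [lt_ic | le_ci] := ltnP i c.
  by rewrite (col_weight_above _ wv_neq0 lt_ic) mul0r.
by rewrite digit_ge_mu1 ?mulr0 // (leq_trans le_mc le_ci).
Qed.

Lemma col_law_below c k a : (c.+1 < mu1 b k)%N -> (mu1 b k <= N)%N ->
  col_law c k a = b%:R^-1.
Proof.
move=> lt_cm le_mN; have mu1_gt0 : (0 < mu1 b k)%N by apply: leq_ltn_trans lt_cm.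
have lt_i0N : ((mu1 b k).-1 < N)%N by rewrite prednK.
pose i0 := Ordinal lt_i0N.
have dk_neq0 : digit b k i0 != 0 by apply: digit_mu1_neq0.
have lt_ci0 : (c < i0)%N by rewrite /= -ltnS prednK.
have const_law a1 a2 : col_law c k a1 = col_law c k a2.
  pose t := (a1 - a2) / digit b k i0.
  apply: (eq_fibre_weight _ _ (col_update i0 (+%R^~ t))).
  - exact/col_update_inj/addIr.
  - move=> v; apply: col_weight_update => x.
    by rewrite /entry_prob ltnNge (ltnW lt_ci0) (gtn_eqF lt_ci0).
  move=> v _; rewrite col_dot_update addrAC subrr add0r divfK //.
  by rewrite -[X in _ == X](subrK a2 a1) [_ - _ + a2]addrC (inj_eq (addIr _)).
rewrite /col_law (@fibre_weight_uniform _ _ _ _ _ setT) ?sum_col_weight ?cardsT ?card_Fp //.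
- by move=> a1 a2 _ _; apply: const_law.
- by move=> a'; rewrite in_setT.
Qed.

Lemma col_law_diag c k a : c.+1 = mu1 b k -> (mu1 b k <= N)%N -> a != 0 ->
  col_law c k a = b.-1%:R^-1.
Proof.
move=> mu1_kE le_mN a_neq0; have lt_cN : (c < N)%N by rewrite mu1_kE.
pose i0 := Ordinal lt_cN.
have dk_neq0 : digit b k i0 != 0.
  by rewrite /= -[c]/(c.+1.-1) mu1_kE digit_mu1_neq0 // -mu1_kE.
have dot_diag v : col_weight c v != 0 -> col_dot k v = v i0 * digit b k i0.
  move=> wv_neq0; rewrite /col_dot (bigD1 i0) //= big1 ?addr0 // => i.
  rewrite -val_eqE /= => ne_ic; have [lt_ic | lt_ci | eq_ic] := ltngtP i c.
  - by rewrite (col_weight_above _ wv_neq0 lt_ic) mul0r.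
  - by rewrite digit_ge_mu1 ?mulr0 // -mu1_kE.
  - by rewrite eq_ic eqxx in ne_ic.
have const_law : {in [set~ 0] &, forall a1 a2, col_law c k a1 = col_law c k a2}.
  move=> a1 a2; rewrite !inE => a1_neq0 a2_neq0; pose t := a1 / a2.
  have t_neq0 : t != 0 by rewrite mulf_neq0 ?invr_eq0.
  have w_upd v : col_weight c (col_update i0 ( *%R t) v) = col_weight c v.
    apply: col_weight_update => x.
    by rewrite /entry_prob /= ltnn eqxx mulf_eq0 (negbTE t_neq0).
  apply: (eq_fibre_weight _ _ (col_update i0 ( *%R t))) => // [|v wv_neq0].
    exact/col_update_inj/mulfI.
  rewrite !dot_diag ?w_upd // ffunE eqxx -mulrA.
  by rewrite -[X in _ == X](divfK a2_neq0) -/t (inj_eq (mulfI t_neq0)).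
rewrite /col_law (@fibre_weight_uniform _ _ _ _ _ [set~ 0]) ?sum_col_weight
  ?cardsC1 ?card_Fp ?inE //.
move=> a'; rewrite !inE negbK => /eqP ->; apply: big1 => v _.
have [-> | wv_neq0] := eqVneq (col_weight c v) 0; first by rewrite mul0r.
rewrite dot_diag // mulf_eq0 (negbTE (col_weight_diag i0 wv_neq0 _)) //.
by rewrite (negbTE dk_neq0) mulr0.
Qed.

Lemma prod_col_law {k k' n : nat} :
  mu1 b k' = mu1 b k -> (mu1 b k <= n)%N -> (n <= N)%N ->
  \prod_(c < n) col_law c k (digit b k' c) =
  (if k != 0%N then b%:R / b.-1%:R else 1) / b%:R ^+ mu1 b k.
Proof.
move=> mu1_k' le_mn le_nN; have le_mN := leq_trans le_mn le_nN.
rewrite -(big_mkord xpredT (fun c => col_law c k (digit b k' c))).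
rewrite (big_cat_nat (leq0n _) le_mn) /= [X in _ * X]big1_seq ?mulr1 => [|c]; last first.
  rewrite /= mem_index_iota => /andP[le_mc _].
  by rewrite digit_ge_mu1 ?mu1_k' // col_law_ge.
rewrite -(mu1_eq0 k); case mu1_kE : (mu1 b k) => [|m] /=.
  by rewrite big_nil expr0 divr1.
have dk'_neq0 : digit b k' m != 0.
  by rewrite -[m]/(m.+1.-1) -mu1_kE -mu1_k' digit_mu1_neq0 ?mu1_k' ?mu1_kE.
rewrite big_nat_recr //= col_law_diag ?mu1_kE //; last by rewrite -mu1_kE.
rewrite (eq_big_nat _ _ (F2 := fun _ => b%:R^-1)) => [|c /andP[_ lt_cm]]; last first.
  by rewrite col_law_below // mu1_kE ltnS.
rewrite prodr_const_nat subn0 exprS exprVn.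
have bm_neq0 : b%:R ^+ m != 0 :> rat by rewrite expf_neq0 ?prime_natr_neq0.
by field; rewrite bm_neq0 prime_natr_neq0 ?prime_pred_natr_neq0.
Qed.

Lemma mat_event_prob (k k' n : nat) :
  \sum_(M : {ffun 'I_N * 'I_n -> 'F_b}) mat_prob b N n M *
     [forall c : 'I_n, (\sum_(i < N) M (i, c) * digit b k i) == digit b k' c]%:R
  = \prod_(c < n) col_law c k (digit b k' c).
Proof.
pose cols (G : {ffun 'I_n -> {ffun 'I_N -> 'F_b}}) : {ffun 'I_N * 'I_n -> 'F_b} :=
  [ffun e => G e.2 e.1].
have cols_bij : bijective cols.
  exists (fun M : {ffun 'I_N * 'I_n -> 'F_b} =>
    [ffun c => [ffun i => M (i, c)] : {ffun 'I_N -> 'F_b}]) => [G | M].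
    by apply/ffunP => c; apply/ffunP => i; rewrite !ffunE.
  by apply/ffunP => -[i c]; rewrite !ffunE.
rewrite (reindex cols) /=; last exact: onW_bij.
rewrite -(sum_ffun_prod_forall _ _ _ (fun c : 'I_n => col_weight c)
            (fun (c : 'I_n) v => col_dot k v == digit b k' c)).
apply: eq_bigr => G _; congr (_ * _%:R).
  rewrite /mat_prob (eq_bigr (fun e : 'I_N * 'I_n => entry_prob b e.1 e.2 (G e.2 e.1)));
    last by move=> e _; rewrite ffunE.
  rewrite -(pair_bigA _ (fun (i : 'I_N) (c : 'I_n) => entry_prob b i c (G c i))).
  by rewrite exchange_big.
by apply/congr1/eq_forallb => c; rewrite /col_dot; under eq_bigr do rewrite ffunE.
Qed.

End Columns.

End Radix.

Theorem lemma2p14 (b s : nat) (k : 'I_s -> nat) :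
  prime b -> (0 < s)%N ->
  (forall (j : 'I_s) (L : nat -> nat -> 'F_b), inLinf b L ->
     exists l : nat, (forall i, digit b l i = LTvec b L (k j) i) /\
                     mu1 b l = mu1 b (k j)) /\
  (forall (k' : 'I_s -> nat) (n N : nat),
     (forall j, mu1 b (k' j) = mu1 b (k j)) ->
     (forall j, mu1 b (k j) <= n)%N ->
     (n <= N)%N -> (forall j, k j < b ^ N)%N ->
     prob_event b s N n k k' =
       (b%:R / (b.-1)%:R) ^+ #|[set j : 'I_s | k j != 0%N]|
       / (b%:R ^+ (\sum_(j < s) mu1 b (k j)))).
Proof.
move=> b_prime _; split=> [j L L_lower | k' n N mu1_k' le_mn le_nN _].
  exact: LTvec_digits.
rewrite /prob_event (sum_ffun_prod_forall _ _ _ (fun=> mat_prob b N n) (fun j M =>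
  [forall c : 'I_n, (\sum_(i < N) M (i, c) * digit b (k j) i) == digit b (k' j) c])).
rewrite (eq_bigr _ (fun j _ => mat_event_prob b N (k j) (k' j) n)).
rewrite (eq_bigr _ (fun j _ => prod_col_law _ b_prime _ (mu1_k' j) (le_mn j) le_nN)).
by rewrite prodf_div -big_mkcond prodr_const prodrXr cardsE.
Qed.
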